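(* Let $S$ (students) and $C$ (colleges) be finite disjoint sets with preferences and capacities as described in the context, and let $\mu,\mu'$ be two stable many-to-one matchings on $S\cup C$. Suppose $s\in S$ satisfies $\mu'(s)\succ_s\mu(s)$. Then $s$ belongs to a preference cycle $s_0c_0s_1c_1\dots s_kc_ks_0$ which is $(S,\mu)$-dominated and $(S,\mu')$-dominating, and every college $c_i$ in this cycle satisfies $|\mu(c_i)|=|\mu'(c_i)|=q_{c_i}$.
   Context: Each student $s\in S$ has a strict preference order $\succ_s$ over $C\cup\{\emptyset\}$, $\emptyset$ being the outside option. Each college $c\in C$ has a capacity $q_c\in\mathbb{Z}_{\geq 1}$ and a strict ranking $\succ_c$ over $S\cup\{\emptyset\}$; $c$ likes $s$ if $s\succ_c\emptyset$. College preferences over sets of students are responsive to this ranking: for any set $A\subseteq S$ and distinct $s_1,s_2\notin A$, $c$ prefers $A\cup\{s_1\}$ to $A\cup\{s_2\}$ iff $s_1\succ_c s_2$. A many-to-one matching is a map $\mu$ with $\mu(s)\in C\cup\{\emptyset\}$ for $s\in S$ and $\mu(c)=\{s\in S:\mu(s)=c\}$ for $c\in C$. It is individually rational if $\mu(s)\succ_s\emptyset$ whenever $\mu(s)\neq\emptyset$, every $c$ likes every student in $\mu(c)$, and $|\mu(c)|\le q_c$ for all $c$. A pair $(s,c)\in S\times C$ blocks $\mu$ if $c\succ_s\mu(s)$ and either $s\succ_c s'$ for some $s'\in\mu(c)$, or $c$ likes $s$ and $|\mu(c)|<q_c$. $\mu$ is stable if it is individually rational and has no blocking pair. A preference cycle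 is a cyclic list $s_0c_0s_1c_1\dots s_kc_ks_0$ of pairwise distinct agents, $s_i\in S$, $c_i\in C$, such that each agent strictly prefers (according to its ranking) its successor in the cycle to its predecessor. For a matching $\mu$ and $X\in\{S,C\}$, a preference cycle is $(X,\mu)$-dominated if for every agent $a\in X$ in the cycle: if $a\in S$, its predecessor is $\mu(a)$; if $a\in C$, its predecessor belongs to $\mu(a)$. It is $(X,\mu)$-dominating if the same holds with ''successor'' in place of ''predecessor''. *)

From mathcomp Require Import all_boot.
Set Implicit Arguments. Unset Strict Implicit. Unset Printing Implicit Defensive.

(* A strict (total) preference order given as a boolean relation:
   r x y  means  "x is strictly preferred to y". *)
Definition strict_total_order (T : eqType) (r : rel T) : Prop :=
  irreflexive r /\ transitive r /\ (forall x y, x != y -> r x y || r y x).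

Section Matching.
Variables (S C : finType).
(* prefS s x y : x ≻_s y on C ∪ {∅} (None = outside option ∅)
   prefC c x y : x ≻_c y on S ∪ {∅} (None = ∅) *)
Variables (prefS : S -> rel (option C)) (prefC : C -> rel (option S))
          (q : C -> nat).

(* a many-to-one matching is given by mu : S -> option C; mu(c) is: *)
Definition assigned (mu : S -> option C) (c : C) : {set S} :=
  [set s | mu s == Some c].

Definition likes (c : C) (s : S) : bool := prefC c (Some s) None.

Definition indiv_rational (mu : S -> option C) : Prop :=
  (forall s c, mu s = Some c -> prefS s (Some c) None) /\
  (forall c s, s \in assigned mu c -> likes c s) /\
  (forall c, #|assigned mu c| <= q c).

Definition blocks (mu : S -> option C) (s : S) (c : C) : Prop :=
  prefS s (Some c) (mu s) /\
  ((exists2 s', s' \in assigned mu c & prefC c (Some s) (Some s')) \/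
   (likes c s /\ #|assigned mu c| < q c)).

Definition stable (mu : S -> option C) : Prop :=
  indiv_rational mu /\ forall s c, ~ blocks mu s c.

(* A preference cycle s_0 c_0 s_1 c_1 ... s_k c_k s_0, given by
   sc i = s_i and cc i = c_i for i : 'I_k.+1 (indices mod k+1).
   In the cycle, the predecessor of s_i is c_{i-1} and its successor is c_i;
   the predecessor of c_i is s_i and its successor is s_{i+1}. *)
Definition pref_cycle (k : nat) (sc : 'I_k.+1 -> S) (cc : 'I_k.+1 -> C) : Prop :=
  injective sc /\ injective cc /\
  (forall i, prefS (sc i) (Some (cc i)) (Some (cc (ord_pred i)))) /\
  (forall i, prefC (cc i) (Some (sc (ordS i))) (Some (sc i))).

Definition S_dominated (mu : S -> option C) (k : nat)
    (sc : 'I_k.+1 -> S) (cc : 'I_k.+1 -> C) : Prop :=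
  forall i, mu (sc i) = Some (cc (ord_pred i)).

Definition S_dominating (mu : S -> option C) (k : nat)
    (sc : 'I_k.+1 -> S) (cc : 'I_k.+1 -> C) : Prop :=
  forall i, mu (sc i) = Some (cc i).

End Matching.

(* A student x who strictly prefers mu' to mu is sent by mu' to a college c
   that is full under mu and prefers all its mu-students to x (stability of
   mu).  Since |mu'(c)| <= q c = |mu(c)|, c loses at least as many students as
   it gains, and every student it loses is again better off under mu'
   (stability of mu').  Matching the gained students of each college
   injectively to its lost ones yields an injection, hence a permutation, of
   the students better off under mu'; its orbit through s is a closed walk
   x -> y with mu(y) = mu'(x).  Cutting out the loops between repeated
   colleges leaves a preference cycle through s.  Surjectivity of the
   permutation gives back |gained| = |lost|, so c is full under mu' too. *)

From mathcomp Require Import all_boot zify.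

Set Implicit Arguments.
Unset Strict Implicit.
Unset Printing Implicit Defensive.

Section StrictTotalOrder.
Variables (T : eqType) (r : rel T).
Hypothesis r_sto : strict_total_order r.

Lemma sto_irr x : r x x = false.
Proof. by case: r_sto => irr _; apply: irr. Qed.

Lemma sto_trans y x z : r x y -> r y z -> r x z.
Proof. by case: r_sto => _ [tr _]; apply: tr. Qed.

Lemma sto_total x y : x != y -> r x y || r y x.
Proof. by case: r_sto => _ [_ tot]; apply: tot. Qed.

End StrictTotalOrder.

Section ShortcutClosedWalk.
Variables (T K : eqType) (R : rel T) (key : T -> K).
(* Whether [R a b] holds depends on [a] only through [key a]. *)
Hypothesis R_key : forall a b a' b', R a b -> R a' b' -> key a = key a' -> R a' b.

Lemma closed_walk_key_uniq x0 k (t : nat -> T) :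
  t 0 = x0 -> t k.+1 = x0 -> (forall m, m <= k -> R (t m) (t m.+1)) ->
  exists k' (t' : nat -> T), [/\ t' 0 = x0, t' k'.+1 = x0,
    (forall m, m <= k' -> R (t' m) (t' m.+1)) &
    forall i j, i <= k' -> j <= k' -> key (t' i) = key (t' j) -> i = j].
Proof.
elim: k {-2}k (leqnn k) t => [|N IH] k le_kN t t0 tk walk_t.
  by exists k, t; split=> // i j; lia.
have [/existsP[i /existsP[j /andP[lt_ij /eqP key_ij]]] | uniq_key] :=
  boolP [exists i : 'I_k.+1, exists j : 'I_k.+1, (i < j) && (key (t i) == key (t j))].
  have lt_jk := ltn_ord j.
  (* cut out the loop t i -> ... -> t j, allowed since key (t i) = key (t j) *)
  pose t' m := if m <= i then t m else t (m + (j - i)).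
  apply: (IH (k - (j - i)) _ t'); first lia.
  - by rewrite /t'.
  - rewrite /t' ifF; last by apply/negbTE; lia.
    by have -> : (k - (j - i)).+1 + (j - i) = k.+1 by lia.
  - move=> m le_m; rewrite /t'; case: (ltngtP m i) => [lt_mi|lt_im|->].
    + by apply: walk_t; lia.
    + have -> : m.+1 + (j - i) = (m + (j - i)).+1 by lia.
      by apply: walk_t; lia.
    + have -> : i.+1 + (j - i) = j.+1 by lia.
      by apply: (R_key (walk_t j _) (walk_t i _) (esym key_ij)); lia.
exists k, t; split=> // i j le_ik le_jk key_ij.
have key_neq m n : m < n -> n <= k -> key (t m) <> key (t n).
  move=> lt_mn le_nk key_mn; have lt_mSk : m < k.+1 by lia.
  move/negP: uniq_key; apply; apply/existsP; exists (inord m).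
  by apply/existsP; exists (inord n); rewrite !inordK // lt_mn key_mn eqxx.
case: (ltngtP i j) => // [lt_ij | lt_ji]; exfalso.
  exact: key_neq lt_ij le_jk key_ij.
exact: key_neq lt_ji le_ik (esym key_ij).
Qed.

Lemma closed_walk_key_cycle x0 k (t : nat -> T) :
  t 0 = x0 -> t k.+1 = x0 -> (forall m, m <= k -> R (t m) (t m.+1)) ->
  exists k' (c : 'I_k'.+1 -> T), [/\ c ord0 = x0,
    forall i, R (c i) (c (ordS i)) & injective (fun i => key (c i))].
Proof.
move=> t0 tk walk_t.
have [k' [t' [t'0 t'k walk_t' key_uniq]]] := closed_walk_key_uniq t0 tk walk_t.
exists k', (fun i => t' i); split=> // [i | i j /key_uniq key_ij].
  have lt_ik := ltn_ord i; rewrite /= /ordS /=.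
  case: (ltngtP i.+1 k'.+1) => [lt_Sik | lt_kSi | eq_Sik]; last 1 first.
  - have -> : i.+1 %% k'.+1 = 0 by rewrite eq_Sik modnn.
    by rewrite t'0 -t'k; move: (walk_t' i); rewrite eq_Sik; apply; rewrite -ltnS.
  - by rewrite modn_small ?walk_t'.
  - lia.
by apply: val_inj; apply: key_ij; rewrite -ltnS.
Qed.

End ShortcutClosedWalk.

Section StableMatchings.
Variables (S C : finType)
  (prefS : S -> rel (option C)) (prefC : C -> rel (option S)) (q : C -> nat).
Hypotheses (prefS_sto : forall s, strict_total_order (prefS s))
           (prefC_sto : forall c, strict_total_order (prefC c)).
Variables (mu mu' : S -> option C).
Hypotheses (mu_stable : stable prefS prefC q mu)
           (mu'_stable : stable prefS prefC q mu').

Definition improves x := prefS x (mu' x) (mu x).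

Definition gained c := assigned mu' c :\: assigned mu c.
Definition lost c := assigned mu c :\: assigned mu' c.

Lemma card_assigned_le (m : S -> option C) c :
  stable prefS prefC q m -> #|assigned m c| <= q c.
Proof. by case=> [[_ [_ ->]]]. Qed.

Lemma improves_matched x : improves x -> exists c, mu' x = Some c.
Proof.
rewrite /improves; case: (mu' x) => [c|]; first by exists c.
case mux : (mu x) => [d|] none_d; last by rewrite (sto_irr (prefS_sto x)) in none_d.
have d_none : prefS x (Some d) None by case: mu_stable => [[ir _] _]; apply: ir.
by have := sto_trans (prefS_sto x) none_d d_none; rewrite (sto_irr (prefS_sto x)).
Qed.

Lemma improves_gained x c : improves x -> mu' x = Some c -> x \in gained c.
Proof.
rewrite /improves !inE => + mu'x; rewrite mu'x eqxx andbT.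
by apply: contraTN => /eqP <-; rewrite (sto_irr (prefS_sto x)).
Qed.

Section ImprovingStudent.
Variables (x : S) (c : C).
Hypotheses (x_improves : improves x) (mu'x : mu' x = Some c).

Lemma card_assigned_improved : #|assigned mu c| = q c.
Proof.
apply/eqP; rewrite eqn_leq card_assigned_le // leqNgt; apply/negP=> not_full.
apply: (mu_stable.2 x c); split; first by rewrite -mu'x.
right; split=> //; case: mu'_stable => [[_ [likes_mu' _]] _].
by apply: likes_mu'; rewrite inE mu'x.
Qed.

Lemma prefers_assigned_to_improver y :
  y \in assigned mu c -> prefC c (Some y) (Some x).
Proof.
move=> y_mu; have y_neq_x : Some y != Some x.
  apply: contraTneq (improves_gained x_improves mu'x) => -[<-].
  by rewrite inE y_mu.
case/orP: (sto_total (prefC_sto c) y_neq_x) => // x_y; exfalso.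
apply: (mu_stable.2 x c); split; first by rewrite -mu'x.
by left; exists y.
Qed.

Lemma lost_improves y : y \in lost c -> improves y.
Proof.
rewrite !inE => /andP[mu'y_c /eqP muy].
rewrite /improves muy; case/orP: (sto_total (prefS_sto y) mu'y_c) => // c_y.
exfalso; apply: (mu'_stable.2 y c); split=> //; left; exists x.
  by rewrite inE mu'x.
by apply: prefers_assigned_to_improver; rewrite inE muy.
Qed.

Lemma card_gained_le_lost : #|gained c| <= #|lost c|.
Proof.
rewrite !cardsD setIC card_assigned_improved.
by have := card_assigned_le c mu'_stable; lia.
Qed.

End ImprovingStudent.

Definition next x :=
  if mu' x is Some c then nth x (enum (lost c)) (index x (enum (gained c))) else x.

Definition improvers := [set x | improves x].

Section Next.
Variables (x : S) (c : C).
Hypotheses (x_improves : improves x) (mu'x : mu' x = Some c).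

Lemma index_gained_lt : index x (enum (gained c)) < size (enum (lost c)).
Proof.
rewrite -cardE (leq_trans _ (card_gained_le_lost x_improves mu'x)) //.
by rewrite cardE index_mem mem_enum improves_gained.
Qed.

Lemma next_lost : next x \in lost c.
Proof. by rewrite /next mu'x -mem_enum mem_nth ?index_gained_lt. Qed.

End Next.

Lemma next_improves x : improves x -> improves (next x).
Proof.
move=> x_improves; have [c mu'x] := improves_matched x_improves.
exact: lost_improves x_improves mu'x _ (next_lost x_improves mu'x).
Qed.

Lemma mu_next x : improves x -> mu (next x) = mu' x.
Proof.
move=> x_improves; have [c mu'x] := improves_matched x_improves.
by move: (next_lost x_improves mu'x); rewrite mu'x !inE => /andP[_ /eqP].
Qed.

Lemma next_in_improvers : {homo next : x / x \in improvers}.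
Proof. by move=> x; rewrite !inE; apply: next_improves. Qed.

Lemma next_inj : {in improvers &, injective next}.
Proof.
move=> x y; rewrite !inE => x_improves y_improves next_xy.
have [c mu'x] := improves_matched x_improves.
have mu'y : mu' y = Some c by rewrite -mu_next // -next_xy mu_next.
move: next_xy; rewrite /next mu'x mu'y.
rewrite (set_nth_default x y) ?index_gained_lt // => /eqP.
rewrite nth_uniq ?enum_uniq ?index_gained_lt // => /eqP index_xy.
have gained_x : x \in enum (gained c) by rewrite mem_enum improves_gained.
have gained_y : y \in enum (gained c) by rewrite mem_enum improves_gained.
by rewrite -(nth_index x gained_x) index_xy nth_index.
Qed.

Lemma card_gained_eq_lost x c :
  improves x -> mu' x = Some c -> #|gained c| = #|lost c|.
Proof.
move=> x_improves mu'x.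
apply/eqP; rewrite eqn_leq (card_gained_le_lost x_improves mu'x) /=.
have next_onto : next @: improvers = improvers.
  apply/eqP; rewrite eqEcard (card_in_imset next_inj) leqnn andbT.
  by apply/subsetP=> _ /imsetP[y y_improves ->]; apply: next_in_improvers.
rewrite (leq_trans _ (leq_imset_card next (gained c))) // subset_leq_card //.
apply/subsetP=> y y_lost.
have : y \in improvers by rewrite inE (lost_improves x_improves mu'x y_lost).
rewrite -next_onto => /imsetP[z z_improves next_z]; move: y_lost z_improves.
rewrite next_z !inE => /andP[_ /eqP] + z_improves; rewrite mu_next // => mu'z.
by rewrite imset_f // improves_gained.
Qed.

Lemma card_assigned'_improved x c :
  improves x -> mu' x = Some c -> #|assigned mu' c| = q c.
Proof.
move=> x_improves mu'x; have := card_gained_eq_lost x_improves mu'x.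
have := card_assigned_le c mu'_stable.
have := subset_leq_card (subsetIl (assigned mu' c) (assigned mu c)).
rewrite !cardsD [assigned mu c :&: _]setIC.
by rewrite (card_assigned_improved x_improves mu'x); lia.
Qed.

Lemma improving_cycle s : improves s ->
  exists k (sc : 'I_k.+1 -> S) (cc : 'I_k.+1 -> C), [/\ sc ord0 = s,
    injective cc, forall i, improves (sc i),
    forall i, mu' (sc i) = Some (cc i) &
    forall i, mu (sc (ordS i)) = Some (cc i)].
Proof.
move=> s_improves; have [c0 _] := improves_matched s_improves.
pose step x y := improves x && (mu y == mu' x).
have step_key a b a' b' : step a b -> step a' b' -> mu' a = mu' a' -> step a' b.
  rewrite /step => /andP[_ /eqP mub] /andP[a'_improves _] mu'aa'.
  by rewrite a'_improves mub mu'aa' eqxx.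
have s_improvers : s \in improvers by rewrite inE.
have improves_iter m : improves (iter m next s).
  by have := iter_in m next_in_improvers s_improvers; rewrite inE.
have [k [sc [sc0 step_sc inj_mu'sc]]] :
    exists k (sc : 'I_k.+1 -> S), [/\ sc ord0 = s,
      forall i, step (sc i) (sc (ordS i)) & injective (fun i => mu' (sc i))].
  apply: (closed_walk_key_cycle step_key (x0 := s) (k := (order next s).-1)
                                (t := fun m => iter m next s)) => //.
    by rewrite prednK ?order_gt0 // (iter_order_in next_in_improvers next_inj).
  by move=> m _; rewrite /step improves_iter /= mu_next ?improves_iter.
have sc_improves i : improves (sc i) by case/andP: (step_sc i).
have mu'sc i : mu' (sc i) = Some (odflt c0 (mu' (sc i))).
  by have [c ->] := improves_matched (sc_improves i).
exists k, sc, (fun i => odflt c0 (mu' (sc i))); split=> // [i j eq_ij | i].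
  by apply: inj_mu'sc; rewrite mu'sc eq_ij -mu'sc.
by case/andP: (step_sc i) => _ /eqP ->.
Qed.

End StableMatchings.

Theorem lemma3 (S C : finType)
    (prefS : S -> rel (option C)) (prefC : C -> rel (option S)) (q : C -> nat)
    (hS : forall s, strict_total_order (prefS s))
    (hC : forall c, strict_total_order (prefC c))
    (hq : forall c, 1 <= q c)
    (mu mu' : S -> option C)
    (hmu : stable prefS prefC q mu) (hmu' : stable prefS prefC q mu')
    (s : S) (hs : prefS s (mu' s) (mu s)) :
  exists (k : nat) (sc : 'I_k.+1 -> S) (cc : 'I_k.+1 -> C),
    [/\ pref_cycle prefS prefC sc cc,
        exists i, sc i = s,
        S_dominated mu sc cc,
        S_dominating mu' sc cc &
        forall i, #|assigned mu (cc i)| = q (cc i) /\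
                  #|assigned mu' (cc i)| = q (cc i)].
Proof.
have [k [sc [cc [sc0 cc_inj sc_improves mu'sc mu_scS]]]] :=
  improving_cycle hS hC hmu hmu' hs.
have mu_sc i : mu (sc i) = Some (cc (ord_pred i)) by rewrite -mu_scS ord_predK.
have sc_inj : injective sc.
  by move=> i j eq_ij; apply: cc_inj; apply: Some_inj; rewrite -!mu'sc eq_ij.
exists k, sc, cc; split.
- split; [exact: sc_inj | split; [exact: cc_inj | split=> i]].
    by have := sc_improves i; rewrite /improves mu'sc mu_sc.
  apply: (prefers_assigned_to_improver hS hC hmu (sc_improves i) (mu'sc i)).
  by rewrite inE mu_scS.
- by exists ord0.
- exact: mu_sc.
- exact: mu'sc.
- move=> i; split.
    exact: (card_assigned_improved hmu hmu' (sc_improves i) (mu'sc i)).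
  exact: (card_assigned'_improved hS hC hmu hmu' (sc_improves i) (mu'sc i)).
Qed.
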